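(* Let $A=[a_{ij}]$ be the adjacency matrix of a strongly connected, aperiodic directed graph on $\mathcal X=\{1,\ldots,n\}$, and let $N\ge1$ be such that all entries of $A^N$ are positive. Let $\lambda_A$, $u,v>0$ with $A^Tu=\lambda_Au$, $Av=\lambda_Av$, $\sum_iu_iv_i=1$, $\nu_{RB}(i)=u_iv_i$, $r_{ij}=\frac{v_j}{\lambda_Av_i}a_{ij}$, and $\mathfrak M_{\rm RB}(x_0,\ldots,x_N)=\nu_{RB}(x_0)r_{x_0x_1}\cdots r_{x_{N-1}x_N}$. Let $\mu_0$ be a measure on $\mathcal X$ with $\mu_0(x)>0$ for all $x$ and $\mathfrak M(x_0,\ldots,x_N)=\mu_0(x_0)a_{x_0x_1}\cdots a_{x_{N-1}x_N}$. Let $\mathcal P(\delta_1,\delta_n)$ be the set of probability distributions on $\mathcal X^{N+1}$ with marginal at time $0$ equal to the point mass $\delta_1$ at node $1$ and marginal at time $N$ equal to the point mass $\delta_n$ at node $n$. Then the minimizer $\mathfrak M^*[\delta_1,\delta_n]$ of $\mathbb D(P\|\mathfrak M_{\rm RB})$ over $P\in\mathcal P(\delta_1,\delta_n)$ also solves the problem $\min\{\mathbb D(P\|\mathfrak M)\mid P\in\mathcal P(\delta_1,\delta_n)\}$.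
   Context: Relative entropy of a probability distribution $P$ with respect to a nonnegative measure $Q$ on a finite set: $\mathbb D(P\|Q)=\sum_x P(x)\log\frac{P(x)}{Q(x)}$ if $\mathrm{supp}(P)\subseteq\mathrm{supp}(Q)$ (with $0\log0=0$), and $+\infty$ otherwise. *)

From HB Require Import structures.
From mathcomp Require Import all_boot all_order all_algebra.
From mathcomp Require Import reals ereal exp.
Set Implicit Arguments. Unset Strict Implicit. Unset Printing Implicit Defensive.
Import Order.TTheory GRing.Theory Num.Theory.
Local Open Scope ring_scope.

Section Defs.
Variable R : realType.

Definition mxpow (n : nat) (A : 'M[R]_n) (k : nat) : 'M[R]_n :=
  iter k (fun B => B *m A) 1%:M.

Definition is_adjacency (n : nat) (A : 'M[R]_n) : Prop :=
  forall i j, A i j = 0 \/ A i j = 1.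

Definition strongly_connected (n : nat) (A : 'M[R]_n) : Prop :=
  forall i j, exists k, (0 < k)%N /\ 0 < mxpow A k i j.

Definition aperiodic (n : nat) (A : 'M[R]_n) : Prop :=
  forall d : nat,
    (forall (i : 'I_n) (k : nat), (0 < k)%N -> 0 < mxpow A k i i -> (d %| k)%N) ->
    d = 1%N.

Definition path_t (n N : nat) := {ffun 'I_N.+1 -> 'I_n}.

(* previous / next time index for step k : 'I_N, i.e. times k and k+1 *)
Definition tprev (N : nat) (k : 'I_N) : 'I_N.+1 := widen_ord (leqnSn N) k.
Definition tnext (N : nat) (k : 'I_N) : 'I_N.+1 := lift ord0 k.

Definition path_measure (n N : nat) (mu0 : 'I_n -> R) (t : 'I_n -> 'I_n -> R)
  (x : path_t n N) : R :=
  mu0 (x ord0) * \prod_(k < N) t (x (tprev k)) (x (tnext k)).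

Definition bridge_set (n N : nat) (a b : 'I_n)
  (P : {ffun path_t n N -> R}) : Prop :=
  [/\ forall x, 0 <= P x,
      \sum_x P x = 1,
      forall i : 'I_n, \sum_(x : path_t n N | x ord0 == i) P x = (i == a)%:R &
      forall i : 'I_n, \sum_(x : path_t n N | x ord_max == i) P x = (i == b)%:R].

Definition relent (T : finType) (P Q : T -> R) : \bar R :=
  if [forall x, (P x != 0) ==> (Q x != 0)]
  then (\sum_x (if P x == 0 then 0 else P x * ln (P x / Q x)))%:E
  else +oo%E.

End Defs.

From HB Require Import structures.
From mathcomp Require Import all_boot all_order all_algebra.
From mathcomp Require Import reals ereal exp.
From mathcomp Require Import ring.
Set Implicit Arguments. Unset Strict Implicit. Unset Printing Implicit Defensive.
Import Order.TTheory GRing.Theory Num.Theory.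
Local Open Scope ring_scope.

(* On paths from node 1 to node n the factors v_{x_{k+1}} / v_{x_k} in the
   Ruelle-Bowen measure telescope, so there M_RB = c M with the constant
   c = u_1 v_n / (λ^N μ0(1)).  For every P in P(δ_1, δ_n) this gives
   D(P || M) = D(P || M_RB) + ln c, hence both problems share their minimizers.
   Strong connectivity and aperiodicity enter only through λ > 0. *)

Lemma relent_scale_on_support (R : realType) (T : finType) (P Q1 Q2 : T -> R)
    (c : R) :
  0 < c -> (forall x, 0 <= P x) -> \sum_x P x = 1 -> (forall x, 0 <= Q1 x) ->
  (forall x, P x != 0 -> Q1 x = c * Q2 x) ->
  relent P Q2 = (relent P Q1 + (ln c)%:E)%E.
Proof.
move=> c_gt0 P_ge0 P_sum1 Q1_ge0 Q1E.
have supp_eq : [forall x, (P x != 0) ==> (Q1 x != 0)] =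
               [forall x, (P x != 0) ==> (Q2 x != 0)].
  apply: eq_forallb => x; case: (boolP (P x != 0)) => //= Px.
  by rewrite Q1E // mulf_eq0 negb_or gt_eqF.
rewrite /relent -supp_eq; case: ifP => // /forallP supp.
rewrite -EFinD; congr (_%:E).
have -> : ln c = \sum_x (if P x == 0 then 0 else P x * ln c).
  rewrite -[LHS]mul1r -P_sum1 mulr_suml; apply: eq_bigr => x _.
  by case: eqP => // ->; rewrite mul0r.
rewrite -big_split /=; apply: eq_bigr => x _.
case: eqP => [_|/eqP Px]; first by rewrite addr0.
have Q1x_gt0 : 0 < Q1 x by rewrite lt0r Q1_ge0 andbT; move: (supp x); rewrite Px.
have Px_gt0 : 0 < P x by rewrite lt0r Px P_ge0.
have -> : Q2 x = Q1 x / c by rewrite Q1E // [c * _]mulrC mulfK ?gt_eqF.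
by rewrite invf_div mulrA -mulrDr -lnM ?posrE ?divr_gt0 // mulrAC.
Qed.

Lemma marginal_point_mass (R : numDomainType) (T I : finType) (P : T -> R)
    (f : T -> I) (a : I) (x : T) :
  (forall y, 0 <= P y) -> (forall i, \sum_(y | f y == i) P y = (i == a)%:R) ->
  P x != 0 -> f x = a.
Proof.
move=> P_ge0 marg Px; apply/eqP; apply: contraNT Px => fxa.
have := marg (f x); rewrite (negbTE fxa).
by move=> /(psumr_eq0P (fun y _ => P_ge0 y)) ->.
Qed.

Lemma bridge_set_endpoints (R : realType) n N (a b : 'I_n)
    (P : {ffun path_t n N -> R}) (x : path_t n N) :
  bridge_set a b P -> P x != 0 -> x ord0 = a /\ x ord_max = b.
Proof.
case=> P_ge0 _ marg0 margN Px.
split.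
  exact: (marginal_point_mass (f := fun y : path_t n N => y ord0) P_ge0 marg0 Px).
exact: (marginal_point_mass (f := fun y : path_t n N => y ord_max) P_ge0 margN Px).
Qed.

Lemma path_measure_ge0 (R : realType) n N (mu : 'I_n -> R)
    (t : 'I_n -> 'I_n -> R) (x : path_t n N) :
  (forall i, 0 <= mu i) -> (forall i j, 0 <= t i j) -> 0 <= path_measure mu t x.
Proof. by move=> mu_ge0 t_ge0; rewrite mulr_ge0 // prodr_ge0. Qed.

Lemma telescope_prodf (R : fieldType) (g : nat -> R) (N : nat) :
  (forall k, g k != 0) -> \prod_(k < N) (g k.+1 / g k) = g N / g 0%N.
Proof.
move=> g_neq0; elim: N => [|N IH]; first by rewrite big_ord0 divff.
by rewrite big_ord_recr /= IH; field; rewrite !g_neq0.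
Qed.

Lemma path_prod_telescope (R : fieldType) n N (h : 'I_n -> R) (x : path_t n N) :
  (forall i, h i != 0) ->
  \prod_(k < N) (h (x (tnext k)) / h (x (tprev k))) = h (x ord_max) / h (x ord0).
Proof.
move=> h_neq0; pose g k := h (x (inord k)).
have gE (k : 'I_N.+1) : h (x k) = g k by rewrite /g inord_val.
rewrite (eq_bigr (fun k : 'I_N => g k.+1 / g k)) => [|k _]; last by rewrite !gE.
rewrite telescope_prodf => [|k]; last exact: h_neq0.
by rewrite !gE.
Qed.

Lemma path_measure_htransform (R : realType) n N (mu : 'I_n -> R)
    (t : 'I_n -> 'I_n -> R) (h : 'I_n -> R) (lam : R) (x : path_t n N) :
  lam != 0 -> (forall i, h i != 0) ->
  path_measure mu (fun i j => h j / (lam * h i) * t i j) x =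
  mu (x ord0) * h (x ord_max) / (lam ^+ N * h (x ord0)) *
    \prod_(k < N) t (x (tprev k)) (x (tnext k)).
Proof.
move=> lam_neq0 h_neq0; rewrite /path_measure.
have -> : \prod_(k < N) (h (x (tnext k)) / (lam * h (x (tprev k))) *
                          t (x (tprev k)) (x (tnext k))) =
          \prod_(k < N) (h (x (tnext k)) / h (x (tprev k))) *
          (\prod_(k < N) lam^-1 * \prod_(k < N) t (x (tprev k)) (x (tnext k))).
  rewrite -!big_split; apply: eq_bigr => k _ /=.
  by field; rewrite lam_neq0 h_neq0.
rewrite (path_prod_telescope x h_neq0) prodr_const card_ord exprVn.
by field; rewrite h_neq0 expf_neq0.
Qed.

Lemma mxpow_col_eq0 (R : realType) n (A : 'M[R]_n) (j : 'I_n) (k : nat) :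
  (0 < k)%N -> (forall i, A i j = 0) -> forall i, mxpow A k i j = 0.
Proof.
case: k => // k _ Aj0 i.
by rewrite /mxpow iterS mxE big1 // => l _; rewrite Aj0 mulr0.
Qed.

Lemma left_eigenvalue_gt0 (R : numDomainType) n (A : 'M[R]_n) (u : 'I_n -> R)
    (lam : R) (i j : 'I_n) :
  (forall i j, 0 <= A i j) -> (forall i, 0 < u i) ->
  \sum_l A l j * u l = lam * u j -> A i j != 0 -> 0 < lam.
Proof.
move=> A_ge0 u_gt0 uA Aij; rewrite -(pmulr_lgt0 _ (u_gt0 j)) -uA.
rewrite (bigD1 i) //=; apply: ltr_pwDl.
  by rewrite mulr_gt0 // lt0r Aij A_ge0.
by rewrite sumr_ge0 // => l _; rewrite mulr_ge0 // ltW.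
Qed.

Theorem proposition5p2 (R : realType) (n : nat) (A : 'M[R]_n)
  (HA : is_adjacency A) (Hsc : strongly_connected A) (Hap : aperiodic A)
  (N : nat) (HN : (1 <= N)%N) (HAN : forall i j, 0 < mxpow A N i j)
  (lam : R) (u v : 'I_n -> R)
  (Hu : forall i, 0 < u i) (Hv : forall i, 0 < v i)
  (HuA : forall j, \sum_i A i j * u i = lam * u j)
  (HvA : forall i, \sum_j A i j * v j = lam * v i)
  (Huv : \sum_i u i * v i = 1)
  (mu0 : 'I_n -> R) (Hmu0 : forall x, 0 < mu0 x)
  (x1 xn : 'I_n) (Hx1 : val x1 = 0%N) (Hxn : val xn = n.-1)
  (Pstar : {ffun path_t n N -> R}) :
  let nuRB := fun i => u i * v i in
  let r := fun i j => v j / (lam * v i) * A i j in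
  let MRB := path_measure nuRB r in
  let M := path_measure mu0 (fun i j => A i j) in
  bridge_set x1 xn Pstar ->
  (forall P, bridge_set x1 xn P -> (relent Pstar MRB <= relent P MRB)%E) ->
  forall P, bridge_set x1 xn P -> (relent Pstar M <= relent P M)%E.
Proof.
move=> nuRB r MRB M Pstar_bridge Pstar_min P P_bridge.
have A_ge0 i j : 0 <= A i j by case: (HA i j) => ->.
have lam_gt0 : 0 < lam.
  have [i Ai1] : exists i, A i x1 != 0.
    apply/existsP; apply: contraPT (HAN x1 x1) => /existsPn A1_eq0.
    by rewrite (mxpow_col_eq0 HN) ?ltxx // => i; apply/eqP/negPn.
  exact: left_eigenvalue_gt0 A_ge0 Hu (HuA x1) Ai1.
pose c := u x1 * v xn / lam ^+ N / mu0 x1.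
have c_gt0 : 0 < c by rewrite !divr_gt0 ?mulr_gt0 ?exprn_gt0.
have MRB_ge0 x : 0 <= MRB x.
  apply: path_measure_ge0 => [i|i j]; first by rewrite /nuRB mulr_ge0 ?ltW.
  by rewrite /r mulr_ge0 ?A_ge0 // divr_ge0 ?mulr_ge0 // ltW.
have MRBE (Q : {ffun path_t n N -> R}) : bridge_set x1 xn Q -> forall x, Q x != 0 -> MRB x = c * M x.
  move=> Q_bridge x Qx; have [x0E xNE] := bridge_set_endpoints Q_bridge Qx.
  rewrite /MRB /r path_measure_htransform ?gt_eqF // => [|i]; last by rewrite gt_eqF.
  rewrite /M /path_measure /nuRB /c x0E xNE.
  by field; rewrite !gt_eqF ?exprn_gt0.
have [P_ge0 P_sum1 _ _] := P_bridge; have [S_ge0 S_sum1 _ _] := Pstar_bridge.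
rewrite (relent_scale_on_support c_gt0 P_ge0 P_sum1 MRB_ge0 (MRBE _ P_bridge)).
rewrite (relent_scale_on_support c_gt0 S_ge0 S_sum1 MRB_ge0 (MRBE _ Pstar_bridge)).
by apply: leeD2r; apply: Pstar_min.
Qed.
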